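(* Let $\lambda$ be a regular uncountable cardinal, let $\mathcal{C}=\langle\mathcal{C}_\alpha\mid\alpha<\lambda\rangle$ be a coherent sequence of length $\lambda$ in which every $\mathcal{C}_\alpha$ is finite, and let $S\subseteq\lambda$ be stationary. Suppose there is a club $F\subseteq\lambda$ such that for every $\alpha\in S\cap\mathrm{acc}(F)$, $F\cap\alpha\subseteq\bigcup\mathcal{C}_\alpha$. Then $\mathcal{C}$ has a thread.
   Context: For a set of ordinals $A$, $\mathrm{acc}(A)$ is the set of $\beta<\sup\{\alpha+1\mid\alpha\in A\}$ with $\beta=\sup(A\cap\beta)$. A coherent sequence of length $\lambda$ is $\mathcal{C}=\langle\mathcal{C}_\alpha\mid\alpha<\lambda\rangle$ where each $\mathcal{C}_\alpha$ is a nonempty set of closed unbounded subsets of $\alpha$ (for successor $\alpha=\beta+1$, $\mathcal{C}_\alpha=\{\{\beta\}\}$), such that for all $\beta<\lambda$, $C\in\mathcal{C}_\beta$ and $\alpha\in\mathrm{acc}(C)$, $C\cap\alpha\in\mathcal{C}_\alpha$. A thread through $\mathcal{C}$ is a club $D\subseteq\lambda$ with $D\cap\alpha\in\mathcal{C}_\alpha$ for all $\alpha\in\mathrm{acc}(D)$. *)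

(* The cardinal lambda is represented as a well-ordered type
   (T, lt): the ordinals below lambda are exactly the elements of T.
   Sets of ordinals are predicates T -> Prop; sets of such sets are
   predicates (T -> Prop) -> Prop, with membership taken up to extensional
   equality of the member sets. *)
From Stdlib Require Import List.

Section Defs.
Context {T : Type} (lt : T -> T -> Prop).

Definition le (x y : T) : Prop := lt x y \/ x = y.

Definition strict_well_order : Prop :=
  (forall x, ~ lt x x) /\
  (forall x y z, lt x y -> lt y z -> lt x z) /\
  (forall x y, lt x y \/ x = y \/ lt y x) /\
  well_founded lt.

Definition regular_uncountable_cardinal : Prop :=
  strict_well_order /\
  (* a cardinal: every proper initial segment has smaller cardinality *)
  (forall a : T, ~ exists f : T -> {x : T | lt x a},
        forall u v, f u = f v -> u = v) /\
  (* regular: every unbounded subset has full cardinality *)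
  (forall X : T -> Prop, (forall a, exists x, X x /\ le a x) ->
        exists f : T -> {x : T | X x}, forall u v, f u = f v -> u = v) /\
  (~ exists f : T -> nat, forall u v, f u = f v -> u = v).

(* b = sup X  (least upper bound; sup of the empty set is the least ordinal) *)
Definition is_sup (X : T -> Prop) (b : T) : Prop :=
  (forall x, X x -> le x b) /\
  (forall g, (forall x, X x -> le x g) -> le b g).

Definition cap_below (A : T -> Prop) (b : T) : T -> Prop :=
  fun x => A x /\ lt x b.

(* acc(A) = { β < sup{α+1 | α ∈ A} | β = sup(A ∩ β) };
   β < sup{α+1 | α ∈ A}  iff  β <= α for some α ∈ A *)
Definition acc (A : T -> Prop) (b : T) : Prop :=
  (exists a, A a /\ le b a) /\ is_sup (cap_below A b) b.

(* closed unbounded subsets of a domain [dom] (an initial segment: either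
   {x | x < α} for an ordinal α < λ, or all of T = λ) *)
Definition closed_in (dom : T -> Prop) (A : T -> Prop) : Prop :=
  forall b, dom b -> (exists x, cap_below A b x) ->
    is_sup (cap_below A b) b -> A b.

Definition unbounded_in (dom : T -> Prop) (A : T -> Prop) : Prop :=
  forall g, dom g -> exists d, A d /\ dom d /\ le g d.

Definition club_in (dom : T -> Prop) (A : T -> Prop) : Prop :=
  (forall x, A x -> dom x) /\ closed_in dom A /\ unbounded_in dom A.

Definition below (a : T) : T -> Prop := fun x => lt x a.

Definition club (A : T -> Prop) : Prop := club_in (fun _ => True) A.

Definition stationary (S : T -> Prop) : Prop :=
  forall D, club D -> exists x, S x /\ D x.

Definition is_succ (b a : T) : Prop :=
  lt b a /\ forall g, lt b g -> le a g.

Definition ext_eq (A B : T -> Prop) : Prop := forall x, A x <-> B x.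

Definition mem_fam (F : (T -> Prop) -> Prop) (A : T -> Prop) : Prop :=
  exists E, F E /\ ext_eq E A.

Definition finite_fam (F : (T -> Prop) -> Prop) : Prop :=
  exists l : list (T -> Prop), forall E, F E -> exists E', In E' l /\ ext_eq E E'.

Definition big_union (F : (T -> Prop) -> Prop) : T -> Prop :=
  fun x => exists E, F E /\ E x.

Definition coherent_seq (C : T -> (T -> Prop) -> Prop) : Prop :=
  (forall a, exists E, C a E) /\
  (forall a E, C a E -> club_in (below a) E) /\
  (forall b a, is_succ b a -> forall E, C a E -> ext_eq E (fun x => x = b)) /\
  (forall b E, C b E -> forall a, acc E a -> mem_fam (C a) (cap_below E a)).

Definition thread (C : T -> (T -> Prop) -> Prop) (D : T -> Prop) : Prop :=
  club D /\ forall a, acc D a -> mem_fam (C a) (cap_below D a).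

End Defs.

(* Enumerate each C_a as a finite list. Since λ has uncountable cofinality,
   for some fixed n the list has length at most n at unboundedly many
   a ∈ S ∩ acc(F). For two such points a < a', the set F ∩ a is cofinal in a
   and covered by the at most n members of C_a', so one of them is cofinal in
   a, and by coherence its trace on a is a member of C_a. Fix an ultrafilter U
   extending the tail filter on these points: for each a, U-almost every a'
   gives the same pair (i, j), member i of C_a' tracing to member j of C_a, and
   a further pigeonhole fixes i = i0 for unboundedly many a. The thread is the
   union of the members j obtained in this way: any two of them are traces of
   member i0 of C_a' for one common a' (two U-large sets meet), hence cohere. *)
From Stdlib Require Import Classical ClassicalEpsilon List Lia.
From mathcomp Require classical.filter.
From Pilot Require Import Defs.

Section Extensionality.
Context {T : Type} (lt : T -> T -> Prop).

Lemma ext_eq_sym {A B : T -> Prop} : ext_eq A B -> ext_eq B A.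
Proof. intros H x; split; apply H. Qed.

Lemma ext_eq_trans {A B E : T -> Prop} : ext_eq A B -> ext_eq B E -> ext_eq A E.
Proof. intros H1 H2 x; split; intros; [apply H2, H1|apply H1, H2]; assumption. Qed.

Lemma cap_below_ext {A B : T -> Prop} a :
  ext_eq A B -> ext_eq (cap_below lt A a) (cap_below lt B a).
Proof. intros H x; split; intros [Hx Hlt]; split; auto; apply H; exact Hx. Qed.

Lemma is_sup_ext {A B : T -> Prop} {s} : ext_eq A B -> is_sup lt A s -> is_sup lt B s.
Proof.
  intros H [Hub Hleast]; split.
  - intros x Bx; apply Hub, H, Bx.
  - intros g Hg; apply Hleast; intros x Ax; apply Hg, H, Ax.
Qed.

Lemma acc_ext {A B : T -> Prop} {a} : ext_eq A B -> acc lt A a -> acc lt B a.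
Proof.
  intros H [[x [Ax Hx]] Hsup]; split.
  - exists x; split; auto; apply H, Ax.
  - exact (is_sup_ext (cap_below_ext a H) Hsup).
Qed.

Lemma mem_fam_ext {G : (T -> Prop) -> Prop} {A B} : mem_fam G A -> ext_eq A B -> mem_fam G B.
Proof. intros [E [GE HE]] H; exists E; split; auto; eapply ext_eq_trans; eauto. Qed.

Lemma club_in_ext {dom A B : T -> Prop} : club_in lt dom A -> ext_eq A B -> club_in lt dom B.
Proof.
  intros [Hdom [Hclosed Hunb]] H; split; [|split].
  - intros x Bx; apply Hdom, H, Bx.
  - intros b Hb [x Hx] Hsup; apply H, Hclosed; auto.
    + exists x; apply (cap_below_ext b H); exact Hx.
    + exact (is_sup_ext (cap_below_ext b (ext_eq_sym H)) Hsup).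
  - intros g Hg; destruct (Hunb g Hg) as [d [Ad Hd]]; exists d; split; auto; apply H, Ad.
Qed.

End Extensionality.

Section Ultrafilter.
Context {T : Type} (U : (T -> Prop) -> Prop).
Hypothesis U_ultra : filter.UltraFilter U.

Lemma ultra_finite_union m (A : nat -> T -> Prop) :
  U (fun x => exists k, k < m /\ A k x) -> exists k, k < m /\ U (A k).
Proof.
  induction m as [|m IH]; intros HU.
  - destruct (filter.filter_ex HU) as [x [k [Hk _]]]; lia.
  - destruct (filter.in_ultra_setVsetC (A m) U_ultra) as [HAm|HnAm].
    + exists m; split; auto.
    + destruct IH as [k [Hk HAk]]; [|exists k; split; [lia|exact HAk]].
      refine (filter.filterS _ (filter.filterI HU HnAm)).
      intros x [[k [Hk Akx]] Hnot]; exists k; split; auto.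
      assert (k <> m) by (intros ->; contradiction); lia.
Qed.

End Ultrafilter.

Section WellOrder.
Variables (T : Type) (lt : T -> T -> Prop).
Hypothesis lt_irrefl : forall x, ~ lt x x.
Hypothesis lt_trans : forall x y z, lt x y -> lt y z -> lt x z.
Hypothesis lt_total : forall x y, lt x y \/ x = y \/ lt y x.
Hypothesis lt_wf : well_founded lt.

Local Notation le := (Defs.le lt).
Local Notation is_sup := (Defs.is_sup lt).
Local Notation cap_below := (Defs.cap_below lt).
Local Notation acc := (Defs.acc lt).
Local Notation club := (Defs.club lt).
Local Notation below := (Defs.below lt).

Lemma le_lt_trans x y z : le x y -> lt y z -> lt x z.
Proof. intros [H| ->] H2; eauto. Qed.

Lemma lt_le_trans x y z : lt x y -> le y z -> lt x z.
Proof. intros H [H2| <-]; eauto. Qed.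

Lemma le_lt_False x y : le x y -> lt y x -> False.
Proof. intros H1 H2; apply (lt_irrefl x); eapply le_lt_trans; eauto. Qed.

Lemma not_lt_le x y : ~ lt x y -> le y x.
Proof. intros H; destruct (lt_total x y) as [h|[h|h]]; [tauto|right; auto|left; auto]. Qed.

Lemma le_total x y : le x y \/ le y x.
Proof. destruct (lt_total x y) as [h|[h|h]]; [left; left|left; right|right; left]; auto. Qed.

Lemma cap_below_cap_below (E : T -> Prop) a b :
  le a b -> ext_eq (cap_below (cap_below E b) a) (cap_below E a).
Proof.
  intros Hab x; split.
  - intros [[Ex _] Hxa]; split; auto.
  - intros [Ex Hxa]; split; [split|]; auto; eapply lt_le_trans; eauto.
Qed.

Lemma sup_exists (X : T -> Prop) b : (forall x, X x -> le x b) -> exists s, is_sup X s.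
Proof.
  intros Hb.
  assert (Hmin : forall u, (forall x, X x -> le x u) ->
            exists m, (forall x, X x -> le x m) /\ forall v, (forall x, X x -> le x v) -> ~ lt v m).
  { intros u; induction u as [u IH] using (well_founded_ind lt_wf); intros Hu.
    destruct (classic (exists v, (forall x, X x -> le x v) /\ lt v u)) as [[v [Hv Hvu]]|Hno].
    - exact (IH v Hvu Hv).
    - exists u; split; auto; intros v Hv Hvu; apply Hno; eauto. }
  destruct (Hmin b Hb) as [m [Hm Hleast]].
  exists m; split; auto; intros g Hg; apply not_lt_le, Hleast, Hg.
Qed.

Definition cofinal_in a (X : T -> Prop) : Prop :=
  forall g, lt g a -> exists x, X x /\ lt g x /\ lt x a.

Lemma acc_cofinal (F : T -> Prop) a : acc F a -> cofinal_in a F.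
Proof.
  intros [_ [_ Hleast]] g Hg; apply NNPP; intros Hno.
  apply (le_lt_False a g); auto; apply Hleast.
  intros x [Fx Hxa]; apply not_lt_le; intros Hgx; apply Hno; eauto.
Qed.

Lemma acc_of_cofinal (E : T -> Prop) a :
  (exists d, E d /\ le a d) -> cofinal_in a E -> acc E a.
Proof.
  intros Hd Hcof; split; [exact Hd|split].
  - intros x [_ Hxa]; left; exact Hxa.
  - intros u Hu; apply not_lt_le; intros Hua.
    destruct (Hcof u Hua) as [x [Ex [Hux Hxa]]].
    exact (le_lt_False _ _ (Hu x (conj Ex Hxa)) Hux).
Qed.

(* The point [y] rules out [a] being the least ordinal, where nothing is cofinal. *)
Lemma cofinal_pigeonhole (P : nat -> T -> Prop) a y (Hy : lt y a) m :
  cofinal_in a (fun x => exists i, i < m /\ P i x) ->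
  exists i, i < m /\ cofinal_in a (P i).
Proof.
  induction m as [|m IH]; intros Hcof.
  - destruct (Hcof y Hy) as [x [[i [Hi _]] _]]; lia.
  - destruct (classic (cofinal_in a (P m))) as [Hm|Hm]; [exists m; split; auto|].
    apply not_all_ex_not in Hm; destruct Hm as [g0 Hg0].
    apply imply_to_and in Hg0; destruct Hg0 as [Hg0a Hnone].
    destruct IH as [i [Hi Hcofi]]; [|exists i; split; [lia|exact Hcofi]].
    intros g Hga.
    assert (Hk : exists k, le g k /\ le g0 k /\ lt k a)
      by (destruct (le_total g g0); [exists g0|exists g]; repeat split; auto; right; auto).
    destruct Hk as [k [Hgk [Hg0k Hka]]].
    destruct (Hcof k Hka) as [x [[i [Hi Pix]] [Hkx Hxa]]].
    exists x; split; [exists i; split; auto|split; [eapply le_lt_trans; eauto|auto]].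
    assert (i <> m); [|lia].
    intros ->; apply Hnone; exists x; split; [|split]; auto; eapply le_lt_trans; eauto.
Qed.

Lemma tail_ultrafilter (x0 : T) (Z : T -> Prop) :
  (forall g, exists a, Z a /\ lt g a) ->
  exists U, filter.UltraFilter U /\ forall g, U (fun a => Z a /\ lt g a).
Proof.
  intros HZ.
  set (tails := fun A : T -> Prop => exists g, forall a, Z a -> lt g a -> A a).
  assert (Htails : filter.ProperFilter tails).
  { apply filter.Build_ProperFilter_ex.
    - intros A [g Hg]; destruct (HZ g) as [a [Za Hga]]; exists a; exact (Hg a Za Hga).
    - constructor.
      + exists x0; intros; exact I.
      + intros A B [g Hg] [h Hh].
        destruct (le_total g h); [exists h|exists g]; intros a Za Ha; split;
          eauto using le_lt_trans.
      + intros A B HAB [g Hg]; exists g; intros a Za Ha; apply HAB; auto. }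
  destruct (filter.ultraFilterLemma Htails) as [U [HU Hsub]].
  exists U; split; auto.
  intros g; apply Hsub; exists g; split; auto.
Qed.

Section Regular.
Hypothesis lt_regular : forall X : T -> Prop, (forall a, exists x, X x /\ le a x) ->
  exists f : T -> {x : T | X x}, forall u v, f u = f v -> u = v.
Hypothesis T_uncountable : ~ exists f : T -> nat, forall u v, f u = f v -> u = v.

(* A cofinal countable range would give an injection of [T] into [nat]. *)
Lemma countable_bounded (f : nat -> T) : exists B, forall n, lt (f n) B.
Proof.
  apply NNPP; intros Hunb.
  assert (Hcof : forall a, exists x, (exists n, f n = x) /\ le a x).
  { intros a; apply NNPP; intros Hno; apply Hunb; exists a; intros n.
    apply NNPP; intros Hn; apply Hno; exists (f n); split; eauto; apply not_lt_le; auto. }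
  destruct (lt_regular _ Hcof) as [h Hinj].
  apply T_uncountable.
  exists (fun t => proj1_sig (constructive_indefinite_description _ (proj2_sig (h t)))).
  intros u v Huv; apply Hinj.
  destruct (constructive_indefinite_description _ (proj2_sig (h u))) as [nu Hnu].
  destruct (constructive_indefinite_description _ (proj2_sig (h v))) as [nv Hnv].
  simpl in Huv; subst nv; rewrite Hnu in Hnv.
  destruct (h u) as [xu pu], (h v) as [xv pv]; simpl in *; subst xv.
  f_equal; apply proof_irrelevance.
Qed.

Lemma no_greatest g : exists x, lt g x.
Proof. destruct (countable_bounded (fun _ => g)) as [B HB]; exists B; exact (HB 0). Qed.

Lemma unbounded_nat_union (X : nat -> T -> Prop) :
  (forall g, exists a, (exists n, X n a) /\ lt g a) ->
  exists n, forall g, exists a, X n a /\ lt g a.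
Proof.
  intros Hunb; apply NNPP; intros Hno.
  assert (Hbound : forall n, exists b, forall a, X n a -> ~ lt b a).
  { intros n; apply NNPP; intros Hn; apply Hno; exists n; intros g.
    apply NNPP; intros Hg; apply Hn; exists g; intros a Xa Hga; apply Hg; eauto. }
  destruct (choice _ Hbound) as [b Hb].
  destruct (countable_bounded b) as [B HB].
  destruct (Hunb B) as [a [[n Xa] HBa]].
  exact (Hb n a Xa (lt_trans _ _ _ (HB n) HBa)).
Qed.

Lemma club_above (F : T -> Prop) : club F -> forall g, exists x, F x /\ lt g x.
Proof.
  intros [_ [_ Hunb]] g; destruct (no_greatest g) as [g' Hg'].
  destruct (Hunb g' I) as [d [Fd [_ Hd]]]; exists d; split; auto; eapply lt_le_trans; eauto.
Qed.

(* The sup of an ω-sequence climbing through [F] is an accumulation point of [F]. *)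
Lemma acc_above_exists (F : T -> Prop) g : club F -> exists s, acc F s /\ lt g s.
Proof.
  intros HF.
  destruct (choice _ (club_above F HF)) as [next Hnext].
  set (f := fix f n := match n with 0 => next g | S n => next (f n) end).
  destruct (countable_bounded f) as [B HB].
  destruct (sup_exists (fun x => exists n, f n = x) B) as [s [Hub Hleast]].
  { intros x [n <-]; left; apply HB. }
  assert (Hf : forall n, lt (f n) s)
    by (intros n; apply lt_le_trans with (f (S n)); [apply Hnext|apply Hub; eauto]).
  exists s; split.
  - split.
    + destruct (club_above F HF s) as [d [Fd Hd]]; exists d; split; auto; left; auto.
    + split; [intros x [_ Hxs]; left; auto|].
      intros u Hu; apply Hleast; intros x [n <-]; apply Hu; split; auto.
      destruct n; apply Hnext.
  - apply lt_le_trans with (f 0); [apply Hnext|apply Hub; eauto].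
Qed.

Lemma acc_above_club (F : T -> Prop) g : club F -> club (fun x => acc F x /\ lt g x).
Proof.
  intros HF; split; [intros; exact I|split].
  - intros b _ [x [[_ Hgx] Hxb]] [_ Hleast]; split; [split|eauto].
    + destruct (club_above F HF b) as [d [Fd Hd]]; exists d; split; auto; left; auto.
    + split; [intros y [_ Hyb]; left; auto|].
      intros u Hu; apply Hleast; intros z [[[_ [_ Hz]] _] Hzb].
      apply Hz; intros y [Fy Hyz]; apply Hu; split; eauto.
  - intros g' _.
    assert (Hk : exists k, le g k /\ le g' k)
      by (destruct (le_total g g'); [exists g'|exists g]; split; auto; right; auto).
    destruct Hk as [k [Hgk Hg'k]].
    destruct (acc_above_exists F k HF) as [s [Hs Hks]].
    exists s; split; [split; auto|split; [exact I|left]]; eapply le_lt_trans; eauto.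
Qed.

Section CoherentSequence.
Variables (C : T -> (T -> Prop) -> Prop) (S F : T -> Prop).
Hypothesis C_club : forall a E, C a E -> club_in lt (below a) E.
Hypothesis C_coherent :
  forall b E, C b E -> forall a, acc E a -> mem_fam (C a) (cap_below E a).
Hypothesis S_stationary : stationary lt S.
Hypothesis F_club : club F.
Hypothesis F_covered :
  forall a, S a -> acc F a -> forall x, cap_below F a x -> big_union (C a) x.
Variable L : T -> list (T -> Prop).
Hypothesis L_enum : forall a E, C a E -> exists E', In E' (L a) /\ ext_eq E E'.

Lemma mem_C_club a A : mem_fam (C a) A -> club_in lt (below a) A.
Proof. intros [E [CE HE]]; exact (club_in_ext lt (C_club a E CE) HE). Qed.

Lemma mem_C_coherent b A a : mem_fam (C b) A -> acc A a -> mem_fam (C a) (cap_below A a).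
Proof.
  intros [E [CE HE]] HA.
  exact (mem_fam_ext (C_coherent b E CE a (acc_ext lt (ext_eq_sym HE) HA))
           (cap_below_ext lt a HE)).
Qed.

(* Indices past the end of [L a] give the empty set, and [L a] may also list
   non-members, so membership in [C a] is always carried separately. *)
Definition nth_club a i : T -> Prop := nth i (L a) (fun _ => False).

Lemma mem_C_nth_club a A :
  mem_fam (C a) A -> exists j, j < length (L a) /\ ext_eq A (nth_club a j).
Proof.
  intros [E [CE HE]]; destruct (L_enum a E CE) as [E' [Hin HE']].
  destruct (In_nth _ _ (fun _ => False) Hin) as [j [Hj Hnth]].
  exists j; split; auto; unfold nth_club; rewrite Hnth.
  exact (ext_eq_trans (ext_eq_sym HE) HE').
Qed.

Definition bounded_point n a :=
  S a /\ acc F a /\ (exists y, lt y a) /\ length (L a) <= n.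

Lemma bounded_points_unbounded : exists n, forall g, exists a, bounded_point n a /\ lt g a.
Proof.
  apply unbounded_nat_union; intros g.
  destruct (S_stationary _ (acc_above_club F g F_club)) as [a [Sa [Fa Hga]]].
  exists a; split; auto; exists (length (L a)); split; [|split; [|split]]; eauto.
Qed.

Definition trace n a i j a' :=
  bounded_point n a' /\ lt a a' /\ mem_fam (C a') (nth_club a' i) /\
  acc (nth_club a' i) a /\ ext_eq (cap_below (nth_club a' i) a) (nth_club a j).

Lemma trace_exists n a a' :
  bounded_point n a -> bounded_point n a' -> lt a a' ->
  exists i j, i < n /\ j < n /\ trace n a i j a'.
Proof.
  intros Ha Ha' Haa'.
  destruct Ha as [Sa [Fa [[y Hy] Hna]]]; pose proof Ha' as [Sa' [Fa' [_ Hna']]].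
  pose (P i x := mem_fam (C a') (nth_club a' i) /\ nth_club a' i x).
  destruct (cofinal_pigeonhole P a y Hy (length (L a'))) as [i [Hi Hcof]].
  { intros g Hg; destruct (acc_cofinal F a Fa g Hg) as [x [Fx [Hgx Hxa]]].
    destruct (F_covered a' Sa' Fa' x) as [E [CE Ex]]; [split; eauto|].
    destruct (mem_C_nth_club a' E) as [i [Hi HE]]; [exists E; split; auto; intros z; tauto|].
    exists x; split; auto; exists i; split; auto; split; [|apply HE; auto].
    exists E; split; auto. }
  destruct (Hcof y Hy) as [x0 [[Hmem _] _]].
  assert (Hacc : acc (nth_club a' i) a).
  { apply acc_of_cofinal; [|intros g Hg; destruct (Hcof g Hg) as [x [[_ Ex] Hx]]; eauto].
    destruct (mem_C_club a' _ Hmem) as [_ [_ Hunb]].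
    destruct (Hunb a Haa') as [d [Ed [_ Hd]]]; eauto. }
  destruct (mem_C_nth_club a _ (mem_C_coherent a' _ a Hmem Hacc)) as [j [Hj HE]].
  exists i, j; split; [lia|split; [lia|]].
  exact (conj Ha' (conj Haa' (conj Hmem (conj Hacc HE)))).
Qed.

Section UltraLimit.
Variables (n : nat) (U : (T -> Prop) -> Prop).
Hypothesis U_ultra : filter.UltraFilter U.
Hypothesis U_tails : forall g, U (fun a => bounded_point n a /\ lt g a).

Lemma trace_ultra a : bounded_point n a -> exists i j, i < n /\ j < n /\ U (trace n a i j).
Proof.
  intros Ha.
  destruct (ultra_finite_union U U_ultra n (fun i x => exists j, j < n /\ trace n a i j x))
    as [i [Hi HUi]].
  { refine (filter.filterS _ (U_tails a)); intros a' [Ha' Haa'].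
    destruct (trace_exists n a a' Ha Ha' Haa') as [i [j [Hi [Hj Htr]]]]; eauto. }
  destruct (ultra_finite_union U U_ultra n (trace n a i)) as [j [Hj HUj]]; eauto.
Qed.

Lemma trace_ultra_fixed_index :
  exists i, forall g, exists a, (exists j, U (trace n a i j)) /\ lt g a.
Proof.
  apply unbounded_nat_union; intros g.
  destruct (filter.filter_ex (U_tails g)) as [a [Ha Hga]].
  destruct (trace_ultra a Ha) as [i [j [_ [_ HU]]]]; eauto.
Qed.

Section Thread.
Variable i0 : nat.
Hypothesis i0_unbounded : forall g, exists a, (exists j, U (trace n a i0 j)) /\ lt g a.

Definition limit_trace a j := U (trace n a i0 j).

Definition limit_thread x := exists a j, limit_trace a j /\ nth_club a j x.

Lemma limit_trace_mem a j : limit_trace a j -> mem_fam (C a) (nth_club a j).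
Proof.
  intros HU; destruct (filter.filter_ex HU) as [a' [_ [_ [Hmem [Hacc Hcap]]]]].
  exact (mem_fam_ext (mem_C_coherent a' _ a Hmem Hacc) Hcap).
Qed.

Lemma limit_trace_club a j : limit_trace a j -> club_in lt (below a) (nth_club a j).
Proof. intros HU; exact (mem_C_club a _ (limit_trace_mem a j HU)). Qed.

Lemma limit_trace_coherent a j b k :
  limit_trace a j -> limit_trace b k -> le a b ->
  ext_eq (cap_below (nth_club b k) a) (nth_club a j).
Proof.
  intros HUa HUb Hab.
  destruct (filter.filter_ex (filter.filterI HUa HUb))
    as [a' [[_ [_ [_ [_ Hcap_a]]]] [_ [_ [_ [_ Hcap_b]]]]]].
  eapply ext_eq_trans; [apply cap_below_ext, ext_eq_sym, Hcap_b|].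
  eapply ext_eq_trans; [apply cap_below_cap_below, Hab|exact Hcap_a].
Qed.

Lemma limit_thread_cap a j :
  limit_trace a j -> ext_eq (cap_below limit_thread a) (nth_club a j).
Proof.
  intros HU x; split.
  - intros [[b [k [HUb Ex]]] Hxa]; destruct (le_total a b) as [Hab|Hba].
    + apply (limit_trace_coherent a j b k HU HUb Hab); split; auto.
    + apply (limit_trace_coherent b k a j HUb HU Hba) in Ex; destruct Ex; auto.
  - intros Ex; split; [exists a, j; auto|].
    destruct (limit_trace_club a j HU) as [Hsub _]; exact (Hsub x Ex).
Qed.

Lemma limit_thread_cap_below a j b :
  limit_trace a j -> le b a ->
  ext_eq (cap_below limit_thread b) (cap_below (nth_club a j) b).
Proof.
  intros HU Hba.
  eapply ext_eq_trans; [apply ext_eq_sym, cap_below_cap_below, Hba|].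
  exact (cap_below_ext lt b (limit_thread_cap a j HU)).
Qed.

Lemma limit_trace_above g : exists a j, limit_trace a j /\ lt g a.
Proof. destruct (i0_unbounded g) as [a [[j HU] Hga]]; exists a, j; auto. Qed.

Lemma limit_thread_club : club limit_thread.
Proof.
  split; [intros; exact I|split].
  - intros b _ [x Hx] Hsup.
    destruct (limit_trace_above b) as [a [j [HU Hba]]].
    pose proof (limit_thread_cap_below a j b HU (or_introl Hba)) as Hcap.
    destruct (limit_trace_club a j HU) as [_ [Hclosed _]].
    exists a, j; split; auto; apply Hclosed; [exact Hba|exists x; apply Hcap, Hx|].
    exact (is_sup_ext lt Hcap Hsup).
  - intros g _; destruct (limit_trace_above g) as [a [j [HU Hga]]].
    destruct (limit_trace_club a j HU) as [_ [_ Hunb]].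
    destruct (Hunb g Hga) as [d [Ed [_ Hgd]]].
    exists d; split; [exists a, j; auto|split; auto].
Qed.

Lemma limit_thread_coherent b :
  acc limit_thread b -> mem_fam (C b) (cap_below limit_thread b).
Proof.
  intros [[x [[a [j [HU Ex]]] Hbx]] Hsup].
  destruct (limit_trace_club a j HU) as [Hsub _].
  assert (Hba : le b a) by (left; eapply le_lt_trans; [exact Hbx|exact (Hsub x Ex)]).
  pose proof (limit_thread_cap_below a j b HU Hba) as Hcap.
  refine (mem_fam_ext (mem_C_coherent a _ b (limit_trace_mem a j HU) _) (ext_eq_sym Hcap)).
  split; [exists x; auto|exact (is_sup_ext lt Hcap Hsup)].
Qed.

End Thread.
End UltraLimit.

Lemma thread_exists : exists D, thread lt C D.
Proof.
  destruct (S_stationary F F_club) as [x0 _].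
  destruct bounded_points_unbounded as [n Hn].
  destruct (tail_ultrafilter x0 (bounded_point n) Hn) as [U [HU Htails]].
  destruct (trace_ultra_fixed_index n U HU Htails) as [i0 Hi0].
  exists (limit_thread n U i0); split.
  - exact (limit_thread_club n U HU i0 Hi0).
  - exact (limit_thread_coherent n U HU i0).
Qed.

End CoherentSequence.
End Regular.
End WellOrder.

Theorem lemma2p8 (T : Type) (lt : T -> T -> Prop)
  (C : T -> (T -> Prop) -> Prop) (S F : T -> Prop) :
  regular_uncountable_cardinal lt ->
  coherent_seq lt C ->
  (forall a, finite_fam (C a)) ->
  stationary lt S ->
  club lt F ->
  (forall a, S a -> acc lt F a ->
     forall x, cap_below lt F a x -> big_union (C a) x) ->
  exists D, thread lt C D.
Proof.
  intros [[lt_irrefl [lt_trans [lt_total lt_wf]]] [_ [lt_regular T_uncountable]]]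
    [_ [C_club [_ C_coherent]]] C_finite S_stationary F_club F_covered.
  destruct (choice (fun a l => forall E, C a E -> exists E', In E' l /\ ext_eq E E') C_finite)
    as [L L_enum].
  eapply thread_exists; eauto.
Qed.
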